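(* Let $x_0\in\mathbb{R}\cup\{+\infty\}$, $T<x_0$, $I:=[T,x_0)$, let $\phi_1,\phi_2\in C^1(I)$ with $\phi_2(x)=o(\phi_1(x))$ as $x\to x_0$, $\phi_1(x)\neq0$, $\phi_2(x)\neq0$ and $W(\phi_1,\phi_2;x)\neq0$ for all $x\in I$, and let $f$ be absolutely continuous on every compact subinterval of $I$. Assume moreover $$\phi_2'(x)=o(\phi_1'(x)),\qquad \frac{\phi_1'(x)}{\phi_1(x)}=O\Big(\frac{\phi_2'(x)}{\phi_2(x)}\Big)\qquad(x\to x_0).$$ If, for real $a_1,a_2$, $$f(x)=a_1\phi_1(x)+a_2\phi_2(x)+o(\phi_2(x)),\qquad \Big(\frac{f(x)}{\phi_1(x)}\Big)'=a_2\Big(\frac{\phi_2(x)}{\phi_1(x)}\Big)'+o\Big(\Big(\frac{\phi_2(x)}{\phi_1(x)}\Big)'\Big)\qquad(x\to x_0),$$ then $f'(x)=a_1\phi_1'(x)+a_2\phi_2'(x)+o(\phi_2'(x))$ as $x\to x_0$ (together with $f(x)=a_1\phi_1(x)+a_2\phi_2(x)+o(\phi_2(x))$).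
   Context: Limits and $O,o$ relations as $x\to x_0$ are taken for $x<x_0$, over points where the functions are defined (e.g. where $f$ is differentiable). $W(g,h;x):=g(x)h'(x)-g'(x)h(x)$. *)

From HB Require Import structures.
From mathcomp Require Import all_boot all_order all_algebra.
From mathcomp Require Import all_classical all_reals all_analysis.
Set Implicit Arguments. Unset Strict Implicit. Unset Printing Implicit Defensive.
Import Order.TTheory GRing.Theory Num.Theory.
Import numFieldNormedType.Exports.
Local Open Scope classical_set_scope.
Local Open Scope ring_scope.

(* "P x holds for all x < x0 sufficiently close to x0" (the left filter at
   x0 when x0 is finite, the filter at +oo when x0 = +oo). *)
Definition near_left (R : realType) (x0 : \bar R) (P : R -> Prop) : Prop :=
  exists t : R, (t%:E < x0)%E /\ forall x : R, t < x -> (x%:E < x0)%E -> P x.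

Definition littleo_left (R : realType) (x0 : \bar R) (D : R -> Prop)
  (g h : R -> R) : Prop :=
  forall e : R, 0 < e -> near_left x0 (fun x => D x -> `|g x| <= e * `|h x|).

Definition bigO_left (R : realType) (x0 : \bar R) (D : R -> Prop)
  (g h : R -> R) : Prop :=
  exists C : R, 0 < C /\ near_left x0 (fun x => D x -> `|g x| <= C * `|h x|).

Definition C1_on (R : realType) (T : R) (x0 : \bar R) (phi dphi : R -> R) : Prop :=
  [/\ forall x : R, T < x -> (x%:E < x0)%E -> is_derive x 1 phi (dphi x),
      (fun h : R => h^-1 * (phi (T + h) - phi T)) @ 0^'+ --> dphi T &
      {within [set x : R | T <= x /\ (x%:E < x0)%E], continuous dphi}].

Definition abs_cont_on (R : realType) (a b : R) (f : R -> R) : Prop :=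
  forall e : R, 0 < e -> exists2 d : R, 0 < d &
    forall (n : nat) (u v : 'I_n -> R),
      (forall k, a <= u k /\ u k <= v k /\ v k <= b) ->
      (forall j k, j != k -> v j <= u k \/ v k <= u j) ->
      \sum_(k < n) (v k - u k) < d ->
      \sum_(k < n) `|f (v k) - f (u k)| < e.

Definition wronsk (R : realType) (g dg h dh : R -> R) (x : R) : R :=
  g x * dh x - dg x * h x.

From HB Require Import structures.
From mathcomp Require Import all_boot all_order all_algebra.
From mathcomp Require Import all_classical all_reals all_analysis.
From mathcomp Require Import ring.
Import Order.TTheory GRing.Theory Num.Theory.
Import numFieldNormedType.Exports.
Local Open Scope classical_set_scope.
Local Open Scope ring_scope.

(* Write [q := phi1'/phi1] and [r := f - a1 phi1 - a2 phi2].  Multiplying the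
   quotient rule by [phi1] gives [phi1 (g/phi1)' = g' - g q], whence
     [f' - a1 phi1' - a2 phi2' = phi1 ((f/phi1)' - a2 (phi2/phi1)') + r q].
   Since [phi1 (phi2/phi1)' = phi2' - phi2 q] and [phi2 q = O(phi2')] by the
   hypothesis on logarithmic derivatives, both summands are [o(phi2')]: the
   first is [o(phi1 (phi2/phi1)')], the second is [o(phi2 q)]. *)

Section LeftAsymptotics.
Context {R : realType} {x0 : \bar R}.

Lemma near_leftI {P Q : R -> Prop} :
  near_left x0 P -> near_left x0 Q -> near_left x0 (fun x => P x /\ Q x).
Proof.
move=> [t1 [t1x0 P1]] [t2 [t2x0 Q2]]; exists (Num.max t1 t2); split.
  by rewrite /Num.max; case: ifP.
by move=> x; rewrite gt_max => /andP[xt1 xt2] xx0; split; [exact: P1|exact: Q2].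
Qed.

Lemma near_leftW {P Q : R -> Prop} :
  (forall x, P x -> Q x) -> near_left x0 P -> near_left x0 Q.
Proof. by move=> PQ [t [tx0 Pt]]; exists t; split=> // x tx xx0; apply/PQ/Pt. Qed.

Lemma near_left_itv {T : R} :
  (T%:E < x0)%E -> near_left x0 (fun x => T < x /\ (x%:E < x0)%E).
Proof. by move=> Tx0; exists T. Qed.

Context {D : R -> Prop}.

Lemma littleo_left_sub {D' : R -> Prop} {g h : R -> R} :
  (forall x, D x -> D' x) -> littleo_left x0 D' g h -> littleo_left x0 D g h.
Proof.
by move=> DD' gh e e0; apply: near_leftW (gh e e0) => x gh_x /DD'.
Qed.

Lemma bigO_left_sub {D' : R -> Prop} {g h : R -> R} :
  (forall x, D x -> D' x) -> bigO_left x0 D' g h -> bigO_left x0 D g h.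
Proof.
by move=> DD' [C [C0 gh]]; exists C; split=> //; apply: near_leftW gh => x gh_x /DD'.
Qed.

Lemma littleo_left_eq {g g' h h' : R -> R} :
  near_left x0 (fun x => D x -> g x = g' x /\ h x = h' x) ->
  littleo_left x0 D g h -> littleo_left x0 D g' h'.
Proof.
move=> eq_gh gh e e0; have := near_leftI eq_gh (gh e e0).
apply: near_leftW => x [eq_x gh_x] Dx.
by have [<- <-] := eq_x Dx; exact: gh_x.
Qed.

Lemma bigO_left_eq {g g' h h' : R -> R} :
  near_left x0 (fun x => D x -> g x = g' x /\ h x = h' x) ->
  bigO_left x0 D g h -> bigO_left x0 D g' h'.
Proof.
move=> eq_gh [C [C0 gh]]; exists C; split=> //.
apply: near_leftW (near_leftI eq_gh gh).
by move=> x [eq_x gh_x] Dx; have [<- <-] := eq_x Dx; exact: gh_x.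
Qed.

Lemma bigO_left_selfB {g h : R -> R} :
  bigO_left x0 D g h -> bigO_left x0 D (fun x => h x - g x) h.
Proof.
move=> [C [C0 gh]]; exists (1 + C); split; first by rewrite addr_gt0.
apply: near_leftW gh => x gh_x Dx.
by rewrite mulrDl mul1r; apply: le_trans (ler_normB _ _) _; rewrite lerD2l gh_x.
Qed.

Lemma littleo_leftD {g1 g2 h : R -> R} :
  littleo_left x0 D g1 h -> littleo_left x0 D g2 h ->
  littleo_left x0 D (fun x => g1 x + g2 x) h.
Proof.
move=> gh1 gh2 e e0; have e20 : 0 < e / 2 by rewrite divr_gt0.
apply: near_leftW (near_leftI (gh1 _ e20) (gh2 _ e20)) => x [gh1x gh2x] Dx.
rewrite [X in X * _](splitr e) mulrDl; apply: le_trans (ler_normD _ _) _.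
by apply: lerD; auto.
Qed.

Lemma littleo_leftMl (m : R -> R) {g h : R -> R} : littleo_left x0 D g h ->
  littleo_left x0 D (fun x => m x * g x) (fun x => m x * h x).
Proof.
move=> gh e e0; apply: near_leftW (gh e e0) => x gh_x Dx.
by rewrite !normrM mulrCA ler_wpM2l ?gh_x.
Qed.

Lemma littleo_leftMr (m : R -> R) {g h : R -> R} : littleo_left x0 D g h ->
  littleo_left x0 D (fun x => g x * m x) (fun x => h x * m x).
Proof.
move=> gh e e0; apply: near_leftW (gh e e0) => x gh_x Dx.
by rewrite !normrM mulrA ler_wpM2r ?gh_x.
Qed.

Lemma littleo_bigO_left {g h k : R -> R} :
  littleo_left x0 D g h -> bigO_left x0 D h k -> littleo_left x0 D g k.
Proof.
move=> gh [C [C0 hk]] e e0; have eC0 : 0 < e / C by rewrite divr_gt0.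
apply: near_leftW (near_leftI (gh _ eC0) hk) => x [gh_x hk_x] Dx.
apply: le_trans (gh_x Dx) _.
have -> : e * `|k x| = e / C * (C * `|k x|) by rewrite mulrA divfK ?lt0r_neq0.
by rewrite ler_wpM2l ?(ltW eC0) ?hk_x.
Qed.

Lemma bigO_left_mul_div {g h k : R -> R} :
  near_left x0 (fun x => k x != 0) ->
  bigO_left x0 D g (fun x => h x / k x) ->
  bigO_left x0 D (fun x => k x * g x) h.
Proof.
move=> k0 [C [C0 gh]]; exists C; split=> //.
apply: near_leftW (near_leftI k0 gh) => x [kx0 gh_x] Dx.
rewrite -[h x](divfK kx0) [k x * _]mulrC !normrM mulrA.
by apply: ler_wpM2r => //; rewrite -normrM gh_x.
Qed.

End LeftAsymptotics.

Lemma mul_derive1_div {R : realType} {g p : R -> R} {x dg dp : R} :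
  p x != 0 -> is_derive x 1 g dg -> is_derive x 1 p dp ->
  p x * derive1 (fun y => g y / p y) x = dg - g x * (dp / p x).
Proof.
move=> px0 g' p'; have gp' := is_deriveM g' (is_deriveV px0 p').
by rewrite derive1E (@derive_val _ _ _ _ _ _ _ gp') /GRing.scale /=; field.
Qed.

Theorem proposition9p2 (R : realType) (x0 : \bar R) (T : R)
  (phi1 dphi1 phi2 dphi2 f : R -> R) (a1 a2 : R) :
  (T%:E < x0)%E ->
  C1_on T x0 phi1 dphi1 -> C1_on T x0 phi2 dphi2 ->
  littleo_left x0 (fun _ => True) phi2 phi1 ->
  (forall x : R, T <= x -> (x%:E < x0)%E ->
     [/\ phi1 x != 0, phi2 x != 0 & wronsk phi1 dphi1 phi2 dphi2 x != 0]) ->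
  (forall a b : R, T <= a -> (b%:E < x0)%E -> abs_cont_on a b f) ->
  littleo_left x0 (fun _ => True) dphi2 dphi1 ->
  bigO_left x0 (fun _ => True) (fun x => dphi1 x / phi1 x)
                               (fun x => dphi2 x / phi2 x) ->
  littleo_left x0 (fun _ => True)
    (fun x => f x - (a1 * phi1 x + a2 * phi2 x)) phi2 ->
  littleo_left x0 (fun x => derivable f x 1)
    (fun x => derive1 (fun y => f y / phi1 y) x
              - a2 * derive1 (fun y => phi2 y / phi1 y) x)
    (fun x => derive1 (fun y => phi2 y / phi1 y) x) ->
  littleo_left x0 (fun x => derivable f x 1)
    (fun x => derive1 f x - (a1 * dphi1 x + a2 * dphi2 x)) dphi2
  /\ littleo_left x0 (fun _ => True)
    (fun x => f x - (a1 * phi1 x + a2 * phi2 x)) phi2.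
Proof.
move=> Tx0 [phi1' _ _] [phi2' _ _] _ nz _ _ logO rem quot; split=> //.
set D := fun x => derivable f x 1.
set q := fun x => dphi1 x / phi1 x.
set E := fun x => derive1 (fun y => phi2 y / phi1 y) x.
have inI := near_left_itv Tx0.
have phi2q_O : bigO_left x0 D (fun x => phi2 x * q x) dphi2.
  apply: bigO_left_mul_div (bigO_left_sub _ logO) => //.
  by apply: near_leftW inI => x [Tx xx0]; have [] := nz x (ltW Tx) xx0.
have phi1E_O : bigO_left x0 D (fun x => phi1 x * E x) dphi2.
  apply: bigO_left_eq (bigO_left_selfB phi2q_O).
  apply: near_leftW inI => x [Tx xx0] _; have [phi1x0 _ _] := nz x (ltW Tx) xx0.
  by rewrite (mul_derive1_div phi1x0 (phi2' x Tx xx0) (phi1' x Tx xx0)).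
have ratio_o := littleo_bigO_left (littleo_leftMl phi1 quot) phi1E_O.
have rem_o := littleo_bigO_left
  (littleo_leftMr q (littleo_left_sub (fun _ _ => I) rem)) phi2q_O.
apply: littleo_left_eq (littleo_leftD ratio_o rem_o).
apply: near_leftW inI => x [Tx xx0] Dx; split=> //.
have [phi1x0 _ _] := nz x (ltW Tx) xx0.
rewrite mulrBr mulrCA (mul_derive1_div phi1x0 (derivableP Dx) (phi1' x Tx xx0)).
rewrite (mul_derive1_div phi1x0 (phi2' x Tx xx0) (phi1' x Tx xx0)) derive1E /q.
by field.
Qed.
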